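(* Let $\Omega\subset\mathbb{R}^n$ be a convex open set and let $c:\Omega\times\mathbb{S}^n_-\to\mathbb{R}$, $c(x,\bar y)=\frac{\langle x,y\rangle}{y_{n+1}}$. Then $c$ is bi-Twisted, and for any $x\in\Omega$ and $p\in\mathbb{R}^n$, $$\mathrm{c\text{-}exp}_x(p)=\Big(\frac{p}{\sqrt{1+|p|^2}},-\frac{1}{\sqrt{1+|p|^2}}\Big).$$
   Context: Points of $\mathbb{S}^n\subset\mathbb{R}^{n+1}$ are written $\bar y=(y,y_{n+1})$ with $y\in\mathbb{R}^n$, and $\mathbb{S}^n_-=\{\bar y\in\mathbb{S}^n\mid y_{n+1}<0\}$. A smooth cost $c$ on $\Omega\times\mathbb{S}^n_-$ is bi-Twisted if for every $x_0\in\Omega$ and $\bar y_0\in\mathbb{S}^n_-$ the maps $\mathbb{S}^n_-\ni\bar y\mapsto -D_xc(x_0,\bar y)\in\mathbb{R}^n$ and $\Omega\ni x\mapsto -D_{\bar y}c(x,\bar y_0)\in T^*_{\bar y_0}\mathbb{S}^n$ are $C^1$ diffeomorphisms (onto their images). The inverse of $\bar y\mapsto -D_xc(x,\bar y)$ is the $c$-exponential map $\mathrm{c\text{-}exp}_x(\cdot)$. *)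

From HB Require Import structures.
From mathcomp Require Import all_boot all_order all_algebra.
From mathcomp Require Import all_classical all_reals all_analysis.
Set Implicit Arguments. Unset Strict Implicit. Unset Printing Implicit Defensive.
Import Order.TTheory GRing.Theory Num.Theory.
Import numFieldNormedType.Exports.
Local Open Scope classical_set_scope.
Local Open Scope ring_scope.

Section Defs.
Variable R : realType.

Definition dotv (n : nat) (u v : 'rV[R]_n) : R := (u *m v^T) 0 0.
Definition sqnorm (n : nat) (u : 'rV[R]_n) : R := dotv u u.

(* Points of S^n are written ybar = (y, y_{n+1}) with y in R^n *)
Definition Sminus (n : nat) : set ('rV[R]_n * R) :=
  [set yb | sqnorm yb.1 + yb.2 ^+ 2 = 1 /\ yb.2 < 0].

Definition ball1 (n : nat) : set 'rV[R]_n := [set u | sqnorm u < 1].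
Definition schart (n : nat) (u : 'rV[R]_n) : 'rV[R]_n * R :=
  (u, - Num.sqrt (1 - sqnorm u)).

Definition convex_rV (n : nat) (O : set 'rV[R]_n) : Prop :=
  forall x y (l : R), O x -> O y -> 0 <= l -> l <= 1 -> O ((1 - l) *: x + l *: y).

Definition grad (n : nat) (f : 'rV[R]_n -> R) (x : 'rV[R]_n) : 'rV[R]_n :=
  \row_i ('D_(delta_mx 0 i) f x).

Definition C1_on (m k : nat) (U : set 'rV[R]_m) (f : 'rV[R]_m -> 'rV[R]_k) : Prop :=
  open U /\ (forall x, U x -> differentiable f x) /\
  (forall v, {within U, continuous (fun z => 'd f z v)}).

Definition C1_diffeo_onto_image (m : nat) (U : set 'rV[R]_m)
    (f : 'rV[R]_m -> 'rV[R]_m) : Prop :=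
  C1_on U f /\
  (forall x y, U x -> U y -> f x = f y -> x = y) /\
  open (f @` U) /\
  exists g : 'rV[R]_m -> 'rV[R]_m,
    (forall x, U x -> g (f x) = x) /\ C1_on (f @` U) g.

(* Maps with domain or
   values related to S^n_- are expressed in the graph chart [schart] of S^n_-
   (coordinates u in the open unit ball); in particular D_ybar c(x, ybar0),
   an element of T*_{ybar0} S^n, is represented by its chart coordinates. *)
Definition bi_twisted (n : nat) (Omega : set 'rV[R]_n)
    (c : 'rV[R]_n -> 'rV[R]_n * R -> R) : Prop :=
  (forall x0, Omega x0 ->
     C1_diffeo_onto_image (@ball1 n)
       (fun u => - grad (fun x => c x (schart u)) x0)) /\
  (forall yb0, Sminus yb0 ->
     C1_diffeo_onto_image Omega
       (fun x => - grad (fun u => c x (schart u)) yb0.1)).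

Definition cost_c (n : nat) (x : 'rV[R]_n) (yb : 'rV[R]_n * R) : R :=
  dotv x yb.1 / yb.2.

End Defs.

From HB Require Import structures.
From mathcomp Require Import all_boot all_order all_algebra.
From mathcomp Require Import all_classical all_reals all_analysis.
From mathcomp Require Import ring lra.
Import Order.TTheory GRing.Theory Num.Theory.
Import numFieldNormedType.Exports.
Local Open Scope classical_set_scope.
Local Open Scope ring_scope.

Set Implicit Arguments. Unset Strict Implicit. Unset Printing Implicit Defensive.

(** Write [rescale b u = u / sqrt (1 + b |u|^2)]; then [rescale (-b)] inverts
    [rescale b].  In the graph chart [u |-> (u, - sqrt (1 - |u|^2))] of the lower
    hemisphere the cost reads [c (x, u) = - <x, rescale (-1) u>].  Hence
    [- D_x c (x0, .)] is [rescale (-1)], a diffeomorphism of the unit ball onto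
    R^n whose inverse [rescale 1] is the c-exponential, and [- D_u c (., u0)] is
    the transpose of the derivative of [rescale (-1)] at [u0], the symmetric map
    [x |-> x / s + <u0, x> u0 / s^3] with [s = sqrt (1 - |u0|^2)], which the
    Sherman-Morrison formula inverts. *)

Section ScaleDifferential.
Context {R : realType} {W : normedModType R}.

(* A copy of [*:%R] to carry the bilinear instance. *)
Definition scale_pair (a : R) (w : W) : W := a *: w.

Lemma scale_pair_is_bilinear :
  bilinear_for
    (GRing.Scale.Law.clone _ _ *:%R _) (GRing.Scale.Law.clone _ _ *:%R _)
    scale_pair.
Proof.
split=> [u'|u] a x y /=; rewrite /scale_pair.
- by rewrite scalerDl scalerA.
- by rewrite scalerDr scalerA mulrC -scalerA.
Qed.

HB.instance Definition _ := bilinear_isBilinear.Build R R W W _ _ scale_pair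
  scale_pair_is_bilinear.

Lemma is_diff_scale_pair (p : R * W) :
  is_diff p (fun q : R * W => scale_pair q.1 q.2)
    (fun q => scale_pair p.1 q.2 + scale_pair q.1 p.2).
Proof.
have scale_cont : continuous (fun q : R * W => scale_pair q.1 q.2).
  exact: scale_continuous.
apply: DiffDef; first exact: differentiable_bilin.
by rewrite diff_bilin.
Qed.

Lemma is_diff_scale {V : normedModType R} (k : V -> R) (f : V -> W) dk df x :
  is_diff x k dk -> is_diff x f df ->
  is_diff x (fun z => k z *: f z) (fun v => k x *: df v + dk v *: f x).
Proof.
move=> dkx dfx.
exact: (is_diff_comp (is_diff_pair dkx dfx) (is_diff_scale_pair (k x, f x))).
Qed.

Lemma is_diffV {V : normedModType R} (f : V -> R) df x :
  is_diff x f df -> f x != 0 ->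
  is_diff x (fun y => (f y)^-1) (fun v => - (f x) ^- 2 * df v).
Proof.
move=> dfx fx0; apply: DiffDef; first exact: differentiableV.
by rewrite diffV // diff_val.
Qed.

Lemma is_diff_sum {V : normedModType R} n (F dF : 'I_n -> V -> W) x :
  (forall i, is_diff x (F i) (dF i)) ->
  is_diff x (\sum_(i < n) F i) (\sum_(i < n) dF i).
Proof.
move=> dFx; elim/big_rec2: _ => [|i f df _ dfx]; first exact: is_diff_cst.
exact: is_diffD.
Qed.

Lemma is_derive1_is_diff (f : R -> R) (t d : R) :
  is_derive t 1 f d -> is_diff t f (fun h => h * d).
Proof.
move=> fd; have df : derivable f t 1 by case: fd.
apply: DiffDef; first exact/derivable1_diffP.
rewrite deriv1E //; apply/funext => h /=.
by rewrite derive1E derive_val.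
Qed.

End ScaleDifferential.

Lemma is_diff_coord {R : realType} m n (M : 'M[R]_(m, n)) i j :
  is_diff M (fun N : 'M[R]_(m, n) => N i j) (fun N => N i j).
Proof.
have @f : {linear 'M[R]_(m, n) -> R}.
  by exists (fun N : 'M[R]_(_, _) => N i j); do 2![eexists]; do ?[constructor];
     rewrite ?mxE// => ? *; rewrite ?mxE//; move=> ?; rewrite !mxE.
rewrite (_ : (fun _ => _) = f) //; apply: DiffDef.
  exact/linear_differentiable/coord_continuous.
by rewrite diff_lin //; exact: coord_continuous.
Qed.

Section DotProduct.
Context {R : realType} {n : nat}.
Implicit Types u v w z : 'rV[R]_n.

Lemma dotvE u v : dotv u v = \sum_(j < n) u 0 j * v 0 j.
Proof. by rewrite /dotv !mxE; apply: eq_bigr => j _; rewrite mxE. Qed.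

Lemma dotvC u v : dotv u v = dotv v u.
Proof. by rewrite !dotvE; apply: eq_bigr => j _; rewrite mulrC. Qed.

Lemma dotvDl u v w : dotv (u + v) w = dotv u w + dotv v w.
Proof. by rewrite !dotvE -big_split; apply: eq_bigr => j _; rewrite mxE mulrDl. Qed.

Lemma dotvDr u v w : dotv w (u + v) = dotv w u + dotv w v.
Proof. by rewrite dotvC dotvDl !(dotvC w). Qed.

Lemma dotvZl a u w : dotv (a *: u) w = a * dotv u w.
Proof. by rewrite !dotvE mulr_sumr; apply: eq_bigr => j _; rewrite mxE mulrA. Qed.

Lemma dotvNl u v : dotv (- u) v = - dotv u v.
Proof. by rewrite -scaleN1r dotvZl mulN1r. Qed.

Lemma dotvZr a u w : dotv w (a *: u) = a * dotv w u.
Proof. by rewrite dotvC dotvZl dotvC. Qed.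

Lemma dotv_delta u (i : 'I_n) : dotv u (delta_mx 0 i) = u 0 i.
Proof.
rewrite dotvE (bigD1 i) //= big1 ?addr0; first by rewrite mxE !eqxx mulr1.
by move=> j /negbTE ji; rewrite mxE ji andbF mulr0.
Qed.

Lemma sqnormZ a u : sqnorm (a *: u) = a ^+ 2 * sqnorm u.
Proof. by rewrite /sqnorm dotvZl dotvZr mulrA expr2. Qed.

Lemma sqnorm_ge0 u : 0 <= sqnorm u.
Proof. by rewrite /sqnorm dotvE; apply: sumr_ge0 => j _; rewrite -expr2 sqr_ge0. Qed.

Lemma is_diff_dotv u z : is_diff z (dotv u) (dotv u).
Proof.
have -> : dotv u = \sum_(j < n) (u 0 j *: fun v : 'rV[R]_n => v 0 j).
  by apply/funext => v; rewrite dotvE fct_sumE.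
by apply: is_diff_sum => j; apply: is_diffZ; exact: is_diff_coord.
Qed.

Lemma is_diff_sqnorm z : is_diff z (@sqnorm R n) (fun v => 2 * dotv z v).
Proof.
pose coord j (v : 'rV[R]_n) := v 0 j.
have -> : @sqnorm R n = \sum_(j < n) (coord j * coord j).
  by apply/funext => v; rewrite /sqnorm dotvE fct_sumE.
apply: is_diff_eq; first by apply: is_diff_sum => j; apply: is_diffM;
  exact: is_diff_coord.
apply/funext => v; rewrite fct_sumE dotvE mulr_sumr; apply: eq_bigr => j _.
by rewrite /coord /= -mulr2n mulr_natl.
Qed.

End DotProduct.

Section Diffeomorphisms.
Context {R : realType}.

Lemma C1_on_is_diff m k (U : set 'rV[R]_m) (f : 'rV[R]_m -> 'rV[R]_k) df :
  open U -> (forall z, U z -> is_diff z f (df z)) ->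
  (forall v z, U z -> {for z, continuous (fun w => df w v)}) -> C1_on U f.
Proof.
move=> oU fdf dfcont; split => //; split; first by move=> z /fdf [].
move=> v; rewrite continuous_open_subspace // => z /set_mem Uz.
have near_df : {near z, (fun w => df w v) =1 (fun w => 'd f w v)}.
  have : \forall w \near z, U w by apply: open_nbhs_nbhs.
  by apply: filterS => w /fdf [_ ->].
apply: cvg_trans (near_eq_cvg near_df) _.
by have [_ ->] := fdf z Uz; exact: dfcont.
Qed.

Lemma C1_diffeo_onto_imageP m (U : set 'rV[R]_m) (f g : 'rV[R]_m -> 'rV[R]_m) :
  C1_on U f -> open (f @` U) -> (forall x, U x -> g (f x) = x) ->
  C1_on (f @` U) g -> C1_diffeo_onto_image U f.
Proof.
move=> f_C1 oimg fK g_C1; split => //; split.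
  by move=> x y Ux Uy fxy; rewrite -(fK x Ux) fxy fK.
by split => //; exists g.
Qed.

End Diffeomorphisms.

Section RankOneUpdate.
Context {R : realType} {n : nat}.
Implicit Types w x y : 'rV[R]_n.

Definition rank1_update (a b : R) w x : 'rV[R]_n := a *: x + (b * dotv w x) *: w.

Lemma dotv_rank1_update a b w x y :
  dotv x (rank1_update a b w y) = dotv (rank1_update a b w x) y.
Proof.
rewrite /rank1_update dotvC !dotvDl !dotvZl.
by rewrite [dotv y x]dotvC; ring.
Qed.

Lemma rank1_update_comp a b a' b' w x :
  rank1_update a b w (rank1_update a' b' w x) =
  rank1_update (a * a') (a * b' + b * a' + b * b' * sqnorm w) w x.
Proof.
rewrite /rank1_update dotvDr !dotvZr !scalerDr !scalerA -addrA -scalerDl.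
by congr (_ + _ *: w); rewrite /sqnorm; ring.
Qed.

Lemma rank1_update10 w x : rank1_update 1 0 w x = x.
Proof. by rewrite /rank1_update mul0r scale0r addr0 scale1r. Qed.

Lemma is_diff_rank1_update a b w z :
  is_diff z (rank1_update a b w) (rank1_update a b w).
Proof.
apply: is_diff_eq; first exact: (is_diffD (is_diffZ a (is_diff_id z))
  (is_diff_scale (is_diffZ b (is_diff_dotv w z)) (is_diff_cst w z))).
by apply/funext => v; rewrite /rank1_update !fctE scaler0 add0r.
Qed.

Lemma C1_on_rank1_update (U : set 'rV[R]_n) a b w :
  open U -> C1_on U (rank1_update a b w).
Proof.
move=> oU; apply: (@C1_on_is_diff _ _ _ _ _ (fun _ => rank1_update a b w)) => //.
  by move=> z _; exact: is_diff_rank1_update.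
by move=> v z _; exact: cst_continuous.
Qed.

Lemma C1_diffeo_rank1_update (U : set 'rV[R]_n) a b w :
  open U -> a != 0 -> a + b * sqnorm w != 0 ->
  C1_diffeo_onto_image U (rank1_update a b w).
Proof.
move=> oU a0 ab0; set L := rank1_update a b w.
(* the Sherman-Morrison inverse *)
set L' := rank1_update a^-1 (- b / (a * (a + b * sqnorm w))) w.
have LK x : L' (L x) = x.
  rewrite /L /L' rank1_update_comp -[RHS](rank1_update10 w).
  by congr rank1_update; field; rewrite ?ab0 ?a0.
have L'K y : L (L' y) = y.
  rewrite /L /L' rank1_update_comp -[RHS](rank1_update10 w).
  by congr rank1_update; field; rewrite ?ab0 ?a0.
have open_img : open (L @` U).
  have -> : L @` U = L' @^-1` U.
    apply/seteqP; split => [_ [x Ux <-]|y Uy]; first by rewrite /= LK.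
    by exists (L' y).
  apply: open_comp => // y _.
  by have [/differentiable_continuous] := is_diff_rank1_update
    a^-1 (- b / (a * (a + b * sqnorm w))) w y.
by apply: C1_diffeo_onto_imageP => //; exact: C1_on_rank1_update.
Qed.

End RankOneUpdate.

Section Rescale.
Context {R : realType} {n : nat}.
Implicit Types u v z : 'rV[R]_n.

Definition rescale (b : R) u : 'rV[R]_n := (Num.sqrt (1 + b * sqnorm u))^-1 *: u.

Lemma sqnorm_rescale b u : 0 < 1 + b * sqnorm u ->
  1 - b * sqnorm (rescale b u) = (1 + b * sqnorm u)^-1.
Proof.
move=> hu; rewrite sqnormZ exprVn sqr_sqrtr ?ltW //.
by field; rewrite gt_eqF.
Qed.

Lemma rescale_domainN b u : 0 < 1 + b * sqnorm u -> 0 < 1 - b * sqnorm (rescale b u).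
Proof. by move=> hu; rewrite sqnorm_rescale // invr_gt0. Qed.

Lemma rescaleK b u : 0 < 1 + b * sqnorm u -> rescale (- b) (rescale b u) = u.
Proof.
move=> hu; rewrite {1}/rescale mulNr sqnorm_rescale // sqrtrV ?ltW // invrK.
by rewrite /rescale scalerA mulfV ?scale1r // sqrtr_eq0 -ltNge.
Qed.

Lemma is_diff_inv_sqrt b z : 0 < 1 + b * sqnorm z ->
  is_diff z (fun u => (Num.sqrt (1 + b * sqnorm u))^-1)
    (fun v => - b * (Num.sqrt (1 + b * sqnorm z))^-1 ^+ 3 * dotv z v).
Proof.
move=> hz.
have dq : is_diff z (fun u => 1 + b * sqnorm u) (fun v => b * (2 * dotv z v)).
  rewrite (_ : (fun u => _) = cst 1 + b *: @sqnorm R n) //.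
  apply: (is_diff_eq (is_diffD (is_diff_cst (1 : R) z)
    (is_diffZ b (is_diff_sqnorm z)))).
  by apply/funext => v; rewrite /= add0r.
have ds := is_diff_comp dq (is_derive1_is_diff (is_derive1_sqrt hz)).
apply: is_diff_eq; first by apply: is_diffV ds _; rewrite /= sqrtr_eq0 -ltNge.
apply/funext => v /=; set s := Num.sqrt _.
have s_neq0 : s != 0 by rewrite sqrtr_eq0 -ltNge.
by field.
Qed.

Lemma is_diff_rescale b z : 0 < 1 + b * sqnorm z ->
  is_diff z (rescale b)
    (rank1_update (Num.sqrt (1 + b * sqnorm z))^-1
                  (- b * (Num.sqrt (1 + b * sqnorm z))^-1 ^+ 3) z).
Proof.
move=> hz; apply: is_diff_eq.
  exact: is_diff_scale (is_diff_inv_sqrt hz) (is_diff_id z).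
by apply/funext => v; rewrite /rank1_update /= mulrA.
Qed.

Lemma C1_on_rescale b (U : set 'rV[R]_n) : open U ->
  (forall u, U u -> 0 < 1 + b * sqnorm u) -> C1_on U (rescale b).
Proof.
move=> oU hU; apply: C1_on_is_diff oU (fun z Uz => is_diff_rescale (hU z Uz)) _.
move=> v z Uz.
have [/differentiable_continuous k_cont _] := is_diff_inv_sqrt (hU z Uz).
have dot_cont : {for z, continuous (fun w => dotv w v)}.
  rewrite (_ : (fun w => _) = dotv v); last by apply/funext => w; exact: dotvC.
  by have [/differentiable_continuous] := is_diff_dotv v z.
apply: continuousD; first exact: continuousZr_tmp.
apply: continuousZ; last exact: cvg_id.
apply: continuousM dot_cont; apply: continuousM; first exact: cst_continuous.
exact: (continuous_comp k_cont (@exprn_continuous R 3 _)).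
Qed.

End Rescale.

Section HemisphereChart.
Context {R : realType} {n : nat}.
Implicit Types u p x : 'rV[R]_n.

Lemma ball1_rescale_domain u : ball1 u -> 0 < 1 + -1 * sqnorm u.
Proof. by rewrite /ball1 /= mulN1r subr_gt0. Qed.

Lemma rescale1_domain p : 0 < 1 + 1 * sqnorm p.
Proof. by rewrite mul1r ltr_pwDl // sqnorm_ge0. Qed.

Lemma rescaleN1K u : ball1 u -> rescale 1 (rescale (-1) u) = u.
Proof. by move=> /ball1_rescale_domain /rescaleK; rewrite opprK. Qed.

Lemma rescale1K p : rescale (-1) (rescale 1 p) = p.
Proof. exact: rescaleK (rescale1_domain p). Qed.

Lemma ball1_rescale1 p : ball1 (rescale 1 p).
Proof. by have := rescale_domainN (rescale1_domain p); rewrite mul1r subr_gt0. Qed.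

Lemma open_ball1 : open (@ball1 R n).
Proof.
apply: (@open_comp _ _ (@sqnorm R n) [set t | t < 1]); last exact: open_lt.
by move=> z _; have [/differentiable_continuous] := is_diff_sqnorm z.
Qed.

Lemma C1_diffeo_rescale_ball : C1_diffeo_onto_image (@ball1 R n) (rescale (-1)).
Proof.
have img : rescale (-1) @` @ball1 R n = setT.
  apply/seteqP; split => // p _; exists (rescale 1 p); last exact: rescale1K.
  exact: ball1_rescale1.
apply: (@C1_diffeo_onto_imageP _ _ _ _ (rescale 1)); rewrite ?img.
- by apply: C1_on_rescale open_ball1 _ => u /ball1_rescale_domain.
- exact: openT.
- exact: rescaleN1K.
- by apply: C1_on_rescale openT _ => u _; exact: rescale1_domain.
Qed.

Lemma Sminus_schart (yb : 'rV[R]_n * R) : Sminus yb -> ball1 yb.1 /\ yb = schart yb.1.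
Proof.
case: yb => y t [/= y_sphere t_lt0]; rewrite /ball1 /schart /=.
have -> : 1 - sqnorm y = t ^+ 2 by rewrite -y_sphere addrAC subrr add0r.
by rewrite sqrtr_sqr ltr0_norm // opprK; split => //; nra.
Qed.

Lemma schart_rescale1 p :
  schart (rescale 1 p) = ((Num.sqrt (1 + sqnorm p))^-1 *: p,
                          - (Num.sqrt (1 + sqnorm p))^-1).
Proof.
rewrite /schart; have := sqnorm_rescale (rescale1_domain p).
rewrite !mul1r => ->; rewrite sqrtrV ?addr_ge0 ?sqnorm_ge0 //.
by rewrite /rescale mul1r.
Qed.

End HemisphereChart.

Section CostGradients.
Context {R : realType} {n : nat}.
Implicit Types a u x : 'rV[R]_n.

Lemma grad_dotv (f : 'rV[R]_n -> R) a x : is_diff x f (dotv a) -> grad f x = a.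
Proof.
by move=> [fx dfx]; apply/rowP => i; rewrite !mxE deriveE // dfx dotv_delta.
Qed.

Lemma cost_schart x u : cost_c x (schart u) = dotv (- x) (rescale (-1) u).
Proof.
by rewrite /cost_c /schart /rescale dotvNl dotvZr mulN1r invrN mulrN mulrC.
Qed.

Lemma grad_cost_schart_x u x0 :
  - grad (fun x => cost_c x (schart u)) x0 = rescale (-1) u.
Proof.
rewrite (_ : (fun x => _) = dotv (- rescale (-1) u)); last first.
  by apply/funext => x; rewrite cost_schart !dotvNl dotvC.
by rewrite (grad_dotv (is_diff_dotv _ x0)) opprK.
Qed.

Lemma grad_cost_schart_u x u0 : ball1 u0 ->
  - grad (fun u => cost_c x (schart u)) u0 =
  rank1_update (Num.sqrt (1 + -1 * sqnorm u0))^-1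
    (- -1 * (Num.sqrt (1 + -1 * sqnorm u0))^-1 ^+ 3) u0 x.
Proof.
move=> /ball1_rescale_domain u0_dom; set L := rank1_update _ _ u0.
have dcost : is_diff u0 (fun u => cost_c x (schart u)) (dotv (- L x)).
  rewrite (_ : (fun u => _) = dotv (- x) \o rescale (-1)); last first.
    by apply/funext => u; rewrite cost_schart.
  apply: is_diff_eq; first exact: is_diff_comp (is_diff_rescale u0_dom)
    (is_diff_dotv _ _).
  by apply/funext => v; rewrite /= !dotvNl dotv_rank1_update.
by rewrite (grad_dotv dcost) opprK.
Qed.

End CostGradients.

Unset Implicit Arguments.

Theorem proposition4p2 (R : realType) (n : nat) (Omega : set 'rV[R]_n) :
  open Omega -> convex_rV Omega ->
  bi_twisted Omega (@cost_c R n) /\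
  (forall (x p : 'rV[R]_n), Omega x ->
     forall yb : 'rV[R]_n * R, Sminus yb ->
       (- grad (fun z => cost_c z yb) x = p <->
        yb = ((Num.sqrt (1 + sqnorm p))^-1 *: p,
              - (Num.sqrt (1 + sqnorm p))^-1))).
Proof.
move=> oOmega _; split; first split.
- move=> x0 _; rewrite (_ : (fun u => _) = rescale (-1)).
    exact: C1_diffeo_rescale_ball.
  by apply/funext => u; exact: grad_cost_schart_x.
- move=> yb0 /Sminus_schart [u0_ball _].
  set s := (Num.sqrt (1 + -1 * sqnorm yb0.1))^-1.
  rewrite (_ : (fun x => _) = rank1_update s (- -1 * s ^+ 3) yb0.1); last first.
    by apply/funext => x; exact: grad_cost_schart_u.
  have s_gt0 : 0 < s by rewrite invr_gt0 sqrtr_gt0 ball1_rescale_domain.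
  apply: C1_diffeo_rank1_update oOmega (lt0r_neq0 s_gt0) (lt0r_neq0 _).
  rewrite opprK mul1r (lt_le_trans s_gt0) // lerDl.
  by rewrite mulr_ge0 ?sqnorm_ge0 ?exprn_ge0 ?ltW.
- move=> x p _ yb /Sminus_schart [y_ball ->].
  rewrite grad_cost_schart_x -schart_rescale1.
  split=> [<-|[-> _]]; first by rewrite rescaleN1K.
  exact: rescale1K.
Qed.
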